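(* Let $P$ be a finite poset with labeling $\omega:P\to\{1,\dots,p\}$ such that $P$ is $\omega$-consistent with rank function $\rho$, and such that $\omega(x)<\omega(y)$ whenever $\rho(x)<\rho(y)$. Then the Jordan–Hölder set of $(P,\omega)$ is uniquely decomposed as the disjoint union $$\mathcal{L}(P,\omega)=\bigsqcup_{Q}\mathcal{L}(Q,\omega),$$ where the union is over all saturated $\omega$-consistent posets $Q$ that extend $P$ and have the same rank function $\rho$ as $(P,\omega)$.
   Context: Write $x\prec y$ if $y$ covers $x$, $E(P)$ the set of covering pairs. A labeling $\omega$ induces $\epsilon:E(P)\to\{-1,1\}$, $\epsilon(x,y)=1$ if $\omega(x)<\omega(y)$ and $-1$ otherwise. $P$ is $\omega$-consistent if each principal ideal $\Lambda_z=\{w\le z\}$ has the property that $\sum\epsilon(x_{i-1},x_i)$ is the same over all its maximal chains $x_0\prec\cdots\prec x_n$; this common value is $\rho(z)$ (the rank function). The Jordan–Hölder set $\mathcal{L}(P,\omega)$ is the set of permutations $\omega(x_1)\omega(x_2)\cdots\omega(x_p)$ with $x_1,\dots,x_p$ a linear extension of $P$. A poset $Q$ on the same underlying set extends $P$ if $x<_Q y$ whenever $x<_P y$. An $\omega$-consistent poset $Q$ is saturated if any $x,y$ with $|\rho_Q(x)-\rho_Q(y)|=1$ are comparable in $Q$. *)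

From mathcomp Require Import all_boot all_order all_algebra.
Set Implicit Arguments. Unset Strict Implicit. Unset Printing Implicit Defensive.
Import GRing.Theory Num.Theory.

Section Posets.
Variable T : finType.

Definition is_poset (le : rel T) : Prop :=
  [/\ reflexive le, antisymmetric le & transitive le].

Definition plt (le : rel T) (x y : T) : bool := (x != y) && le x y.

Definition covers (le : rel T) (x y : T) : bool :=
  plt le x y && [forall z, ~~ (plt le x z && plt le z y)].

Definition minimal (le : rel T) (x : T) : bool := [forall w, ~~ plt le w x].

Definition comparable (le : rel T) (x y : T) : bool := le x y || le y x.

Definition is_labeling (omega : T -> nat) : Prop :=
  injective omega /\ (forall x, 1 <= omega x <= #|T|)%N.

Definition eps (omega : T -> nat) (x y : T) : int :=
  if (omega x < omega y)%N then 1%R else (-1)%R.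

(* A maximal chain x0 < x1 < ... < xn = z of the principal ideal Lambda_z,
   encoded as x0 :: s: x0 is minimal, consecutive elements are covering pairs,
   and the chain ends at z. *)
Definition maxchain (le : rel T) (z x0 : T) (s : seq T) : bool :=
  [&& minimal le x0, path (covers le) x0 s & last x0 s == z].

Definition chain_sum (omega : T -> nat) (x0 : T) (s : seq T) : int :=
  (\sum_(e <- pairmap (eps omega) x0 s) e)%R.

Definition is_rank (le : rel T) (omega : T -> nat) (rho : T -> int) : Prop :=
  forall z x0 s, maxchain le z x0 s -> chain_sum omega x0 s = rho z.

Definition omega_consistent (le : rel T) (omega : T -> nat) : Prop :=
  exists rho, is_rank le omega rho.

Definition extends (P Q : rel T) : Prop :=
  forall x y, plt P x y -> plt Q x y.

Definition saturated (Q : rel T) (rho : T -> int) : Prop :=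
  forall x y, `|(rho x - rho y)%R|%N = 1%N -> comparable Q x y.

Definition linext (le : rel T) (s : seq T) : Prop :=
  perm_eq s (enum T) /\ forall x y, plt le x y -> (index x s < index y s)%N.

Definition JH (le : rel T) (omega : T -> nat) (w : seq nat) : Prop :=
  exists s, linext le s /\ w = map omega s.

End Posets.

From Pilot Require Import Defs.
From mathcomp Require Import all_boot all_order all_algebra.
From mathcomp Require Import zify.
Import GRing.Theory Num.Theory.
Set Implicit Arguments. Unset Strict Implicit. Unset Printing Implicit Defensive.

(* For a linear extension s of P, let Q_s be the transitive closure of the
   relation "x comes before y in s and |rho x - rho y| = 1".  Every saturated
   omega-consistent Q with rank rho having s as a linear extension equals Q_s:
   its covering pairs are such steps (they change the rank by eps = +-1), and
   saturation forces every such step into Q.  Conversely Q_s is admissible: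
   covers of P are steps, the minimal elements of Q_s are minimal in P, and
   along a step eps x y = rho y - rho x because omega is increasing in rho.
   So each word of L(P, omega) lies in L(Q_s, omega), and the word, through
   the injectivity of omega, determines s and hence Q_s. *)

Section PosetFacts.
Variables (T : finType) (le : rel T).

Lemma plt_irr x : plt le x x = false.
Proof. by rewrite /plt eqxx. Qed.

Lemma covers_plt x y : covers le x y -> plt le x y.
Proof. by case/andP. Qed.

Lemma extends_minimal (Q : rel T) x : extends le Q -> minimal Q x -> minimal le x.
Proof.
move=> leQ /forallP Qmin; apply/forallP=> w; apply/negP=> /leQ.
exact/negP/Qmin.
Qed.

Lemma linext_extends (Q : rel T) s : extends le Q -> linext Q s -> linext le s.
Proof. by move=> leQ [s_perm Qs]; split=> // x y /leQ /Qs. Qed.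

Hypothesis le_poset : is_poset le.

Lemma plt_trans : transitive (plt le).
Proof.
case: le_poset => _ le_anti le_trans y x z /andP[nxy lxy] /andP[nyz lyz].
rewrite /plt (le_trans _ _ _ lxy lyz) andbT.
apply: contraNneq nxy => exz; subst z.
by apply/eqP/le_anti; rewrite lxy lyz.
Qed.

Definition nbelow (z : T) : nat := #|[set u | plt le u z]|.

Lemma nbelow_lt w z : plt le w z -> nbelow w < nbelow z.
Proof.
move=> wz; apply/proper_card/properP; split.
  by apply/subsetP=> u; rewrite !inE => /plt_trans; apply.
by exists w; rewrite !inE ?plt_irr.
Qed.

Lemma plt_ind (Pr : T -> Prop) :
  (forall z, (forall w, plt le w z -> Pr w) -> Pr z) -> forall z, Pr z.
Proof.
move=> IH z; suff: forall n z, nbelow z = n -> Pr z by apply.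
elim/ltn_ind=> n IHn {}z z_n; apply: IH => w wz.
by apply: IHn _ erefl; rewrite -z_n nbelow_lt.
Qed.

Lemma covers_between x y : plt le x y -> exists2 w, le x w & covers le w y.
Proof.
move=> xy; case: le_poset => le_refl _ le_trans.
pose between := [pred w | plt le w y && le x w].
have x_between : between x by rewrite /= xy le_refl.
case: (arg_maxnP nbelow x_between) => w /andP[wy xw] w_max.
exists w => //; rewrite /covers wy /=.
apply/forallP=> z; apply/negP=> /andP[wz zy].
have /w_max : plt le z y && le x z by rewrite zy (le_trans _ _ _ xw (andP wz).2).
by rewrite /= leqNgt nbelow_lt.
Qed.

Lemma maxchain_exists z : exists x0 s, maxchain le z x0 s.
Proof.
elim/plt_ind: z => z IH.
have [z_min | /forallPn[w /negPn wz]] := boolP (minimal le z).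
  by exists z, [::]; rewrite /maxchain z_min /= eqxx.
have [v _ vz] := covers_between wz.
have [x0 [s /and3P[x0_min s_path /eqP s_last]]] := IH v (covers_plt vz).
exists x0, (rcons s z).
by rewrite /maxchain x0_min rcons_path s_path s_last vz last_rcons eqxx.
Qed.

Lemma connect_covers x y : le x y -> connect (covers le) x y.
Proof.
elim/plt_ind: y => y IH lxy.
have [<- | nxy] := eqVneq x y; first exact: connect0.
have [w xw wy] := covers_between (introT andP (conj nxy lxy)).
exact: connect_trans (IH w (covers_plt wy) xw) (connect1 wy).
Qed.

End PosetFacts.

Section ConnectFacts.
Variables (T : finType) (e : rel T).

Lemma connect_sub_preorder (Q : rel T) :
  reflexive Q -> transitive Q -> subrel e Q -> subrel (connect e) Q.
Proof.
move=> Q_refl Q_trans eQ x _ /connectP[p e_p ->].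
elim: p x e_p => [|y p IHp] x /=; first by rewrite Q_refl.
by case/andP=> /eQ Qxy /IHp; apply: Q_trans.
Qed.

Lemma covers_connect : irreflexive e -> subrel (covers (connect e)) e.
Proof.
move=> e_irr x y /andP[/andP[nxy /connectP[[|a p] /= e_p y_last]] /forallP x_cov].
  by rewrite y_last eqxx in nxy.
have [xa a_p] := andP e_p.
have [<- // | nay] := eqVneq a y.
have := x_cov a; rewrite /plt nay (connect1 xa).
have -> : connect e a y by apply/connectP; exists p.
by case: eqP xa => [<-|]; rewrite ?e_irr.
Qed.

Variable f : T -> nat.
Hypothesis e_incr : forall x y, e x y -> f x < f y.

Lemma connect_incr x y : connect e x y -> x = y \/ f x < f y.
Proof.
case/connectP=> p; elim: p x => [|a p IHp] x /=; first by left.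
case/andP=> /e_incr fxa /IHp {}IHp /IHp[<-|fay]; right=> //.
exact: ltn_trans fay.
Qed.

Lemma connect_incr_poset : is_poset (connect e).
Proof.
split; [exact: connect0 | | exact: connect_trans].
move=> x y /andP[/connect_incr[// | fxy] /connect_incr[// | fyx]].
by have := ltn_trans fxy fyx; rewrite ltnn.
Qed.

Lemma plt_connect_incr x y : plt (connect e) x y -> f x < f y.
Proof. by case/andP=> nxy /connect_incr[exy | //]; rewrite exy eqxx in nxy. Qed.

End ConnectFacts.

Section Rank.
Variables (T : finType) (omega : T -> nat) (rho : T -> int).
Local Open Scope ring_scope.

Lemma abs_eps x y : `|eps omega x y|%N = 1%N.
Proof. by rewrite /eps; case: ifP. Qed.

Lemma chain_sum_rcons x0 s y :
  chain_sum omega x0 (rcons s y) = chain_sum omega x0 s + eps omega (last x0 s) y.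
Proof.
rewrite /chain_sum; elim: s x0 => [|a s IHs] x0 /=.
  by rewrite !big_cons !big_nil addr0 add0r.
by rewrite !big_cons IHs addrA.
Qed.

Lemma chain_sum_path (e : rel T) x s :
  (forall u v, e u v -> eps omega u v = rho v - rho u) ->
  path e x s -> chain_sum omega x s = rho (last x s) - rho x.
Proof.
move=> e_eps; rewrite /chain_sum; elim: s x => [|a s IHs] x /=.
  by rewrite big_nil subrr.
case/andP=> /e_eps xa /IHs a_s; rewrite big_cons xa a_s.
by rewrite addrC addrA subrK.
Qed.

Lemma is_rank_covers (le : rel T) :
  (forall x, minimal le x -> rho x = 0) ->
  (forall x y, covers le x y -> eps omega x y = rho y - rho x) ->
  is_rank le omega rho.
Proof.
move=> min0 cov_eps z x0 s /and3P[x0_min s_path /eqP <-].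
by rewrite (chain_sum_path cov_eps s_path) (min0 x0 x0_min) subr0.
Qed.

Lemma rank_minimal (le : rel T) x :
  is_rank le omega rho -> minimal le x -> rho x = 0.
Proof.
move=> le_rank x_min.
have /le_rank : maxchain le x x [::] by rewrite /maxchain x_min /= eqxx.
by rewrite /chain_sum big_nil.
Qed.

Lemma rank_covers (le : rel T) x y : is_poset le -> is_rank le omega rho ->
  covers le x y -> eps omega x y = rho y - rho x.
Proof.
move=> le_poset le_rank xy.
have [x0 [s s_chain]] := maxchain_exists le_poset x.
have /and3P[x0_min s_path /eqP s_last] := s_chain.
have y_chain : maxchain le y x0 (rcons s y).
  by rewrite /maxchain x0_min rcons_path s_path s_last xy last_rcons eqxx.
rewrite -(le_rank _ _ _ y_chain) -(le_rank _ _ _ s_chain) chain_sum_rcons s_last.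
by rewrite addrC addKr.
Qed.

Lemma rank_covers_adjacent (le : rel T) x y : is_poset le -> is_rank le omega rho ->
  covers le x y -> `|rho x - rho y|%N = 1%N.
Proof.
move=> le_poset le_rank /(rank_covers le_poset le_rank) xy.
by rewrite -abszN opprB -xy abs_eps.
Qed.

Hypothesis rank_mono : forall x y, rho x < rho y -> (omega x < omega y)%N.

Lemma eps_adjacent x y :
  `|rho x - rho y|%N = 1%N -> eps omega x y = rho y - rho x.
Proof.
move=> xy; rewrite /eps.
have [lt_xy | le_yx] := ltrP (rho x) (rho y).
  by rewrite rank_mono //; lia.
have lt_yx : rho y < rho x by lia.
by rewrite ltnNge ltnW ?rank_mono //=; lia.
Qed.

End Rank.

Section Saturation.
Variables (T : finType) (s : seq T) (omega : T -> nat) (rho : T -> int).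
Local Open Scope ring_scope.

Definition sat_edge : rel T :=
  [rel x y | (index x s < index y s)%N && (`|rho x - rho y|%N == 1%N)].

Definition saturation : rel T := connect sat_edge.

Lemma sat_edge_index x y : sat_edge x y -> (index x s < index y s)%N.
Proof. by case/andP. Qed.

Lemma saturation_poset : is_poset saturation.
Proof. exact: connect_incr_poset sat_edge_index. Qed.

Lemma covers_saturation : subrel (covers saturation) sat_edge.
Proof. by apply: covers_connect => x; rewrite /sat_edge /= ltnn. Qed.

Lemma linext_covers_sat_edge (le : rel T) : is_poset le -> is_rank le omega rho ->
  linext le s -> subrel (covers le) sat_edge.
Proof.
move=> le_poset le_rank [_ le_s] x y xy.
by rewrite /sat_edge /= le_s ?covers_plt // (rank_covers_adjacent le_poset le_rank xy).
Qed.

Lemma linext_sub_saturation (le : rel T) : is_poset le -> is_rank le omega rho ->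
  linext le s -> subrel le saturation.
Proof.
move=> le_poset le_rank le_s x y /(connect_covers le_poset).
by apply: connect_sub => u v /(linext_covers_sat_edge le_poset le_rank le_s) /connect1.
Qed.

Lemma saturated_sat_edge (Q : rel T) : saturated Q rho -> linext Q s ->
  subrel sat_edge Q.
Proof.
move=> Q_sat [_ Q_s] x y /andP[xy /eqP adj].
have nxy : x != y by apply: contra_eqN adj => /eqP->; rewrite subrr.
case/orP: (Q_sat x y adj) => // Qyx.
have /Q_s : plt Q y x by rewrite /plt eq_sym nxy.
by rewrite ltnNge ltnW.
Qed.

Lemma saturated_eq_saturation (Q : rel T) : is_poset Q -> is_rank Q omega rho ->
  saturated Q rho -> linext Q s -> Q =2 saturation.
Proof.
move=> Q_poset Q_rank Q_sat Q_s x y; apply/idP/idP.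
  exact: linext_sub_saturation.
case: Q_poset => Q_refl _ Q_trans.
exact: connect_sub_preorder Q_refl Q_trans (saturated_sat_edge Q_sat Q_s) x y.
Qed.

Hypothesis s_perm : perm_eq s (enum T).

Lemma linext_saturation : linext saturation s.
Proof. by split=> // x y /(plt_connect_incr sat_edge_index). Qed.

Lemma saturation_saturated : saturated saturation rho.
Proof.
have s_all x : x \in s by rewrite (perm_mem s_perm) mem_enum.
move=> x y adj; rewrite /Defs.comparable /saturation.
have [lt_xy | lt_yx | eq_xy] := ltngtP (index x s) (index y s).
- by rewrite connect1 // /sat_edge /= lt_xy adj.
- by rewrite orbC connect1 // /sat_edge /= lt_yx -abszN opprB adj.
- by rewrite (index_inj x (s_all x) (s_all y) eq_xy) connect0.
Qed.

Lemma saturation_admissible (P : rel T) : is_poset P -> is_rank P omega rho ->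
  (forall x y, rho x < rho y -> (omega x < omega y)%N) -> linext P s ->
  [/\ is_poset saturation, extends P saturation, is_rank saturation omega rho
    & saturated saturation rho].
Proof.
move=> P_poset P_rank rank_mono P_s.
have P_sat : extends P saturation.
  move=> x y /andP[nxy Pxy].
  by rewrite /plt nxy (linext_sub_saturation P_poset P_rank P_s Pxy).
split=> //; [exact: saturation_poset | | exact: saturation_saturated].
apply: is_rank_covers => [x /(extends_minimal P_sat) | x y /covers_saturation].
  exact: rank_minimal P_rank.
by case/andP=> _ /eqP /(eps_adjacent rank_mono).
Qed.

End Saturation.

Theorem theorem3p2 (T : finType) (P : rel T) (omega : T -> nat) (rho : T -> int) :
  is_poset P -> is_labeling omega ->
  is_rank P omega rho ->
  (forall x y, (rho x < rho y)%R -> (omega x < omega y)%N) ->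
  let admissible (Q : rel T) : Prop :=
    [/\ is_poset Q, extends P Q, is_rank Q omega rho & saturated Q rho] in
  (forall w, JH P omega w <-> exists Q, admissible Q /\ JH Q omega w) /\
  (forall Q1 Q2 w, admissible Q1 -> admissible Q2 ->
     JH Q1 omega w -> JH Q2 omega w -> Q1 =2 Q2).
Proof.
move=> P_poset [omega_inj _] P_rank rank_mono admissible; split=> [w|].
  split=> [[s [P_s ->]] | [Q [[_ PQ _ _] [s [Q_s ->]]]]].
    have [s_perm _] := P_s.
    exists (saturation s rho); split.
      exact: (saturation_admissible s_perm P_poset P_rank rank_mono P_s).
    by exists s; split=> //; apply: linext_saturation.
  by exists s; split=> //; apply: linext_extends PQ Q_s.
move=> Q1 Q2 w [Q1_poset _ Q1_rank Q1_sat] [Q2_poset _ Q2_rank Q2_sat].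
move=> [s1 [Q1_s1 ->]] [s2 [Q2_s2 /(inj_map omega_inj) s12]]; subst s2.
move=> x y; rewrite (saturated_eq_saturation Q1_poset Q1_rank Q1_sat Q1_s1).
by rewrite (saturated_eq_saturation Q2_poset Q2_rank Q2_sat Q2_s2).
Qed.
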